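(* Let $n\geq 4$ and let $\gamma: WT_n\to\mathrm{GL}_{n+1}(\mathbb{C})$ be a homogeneous $3$-local representation of the welded twin group $WT_n$. Then $\gamma$ is equivalent to one of the five representations $\gamma_j$, $1\leq j\leq 5$, defined by $\gamma_j(s_i)=\mathrm{diag}(I_{i-1},M_j,I_{n-i-1})$ and $\gamma_j(\rho_i)=\mathrm{diag}(I_{i-1},N_j,I_{n-i-1})$ for all $1\leq i\leq n-1$, where: (1) $M_1=\begin{pmatrix}1&0&0\\0&0&\frac1h\\0&h&0\end{pmatrix}$, $N_1=\begin{pmatrix}1&0&0\\0&0&p\\0&\frac1p&0\end{pmatrix}$, $h,p\in\mathbb{C}^*$; (2) $M_2=\begin{pmatrix}0&\frac1d&0\\d&0&0\\0&0&1\end{pmatrix}$, $N_2=\begin{pmatrix}0&k&0\\\frac1k&0&0\\0&0&1\end{pmatrix}$, $d,k\in\mathbb{C}^*$; (3) $M_3=N_3=\begin{pmatrix}1&0&0\\\frac1p&-1&p\\0&0&1\end{pmatrix}$, $p\in\mathbb{C}^*$; (4) $M_4=N_4=\begin{pmatrix}1&k&0\\0&-1&0\\0&\frac1k&1\end{pmatrix}$, $k\in\mathbb{C}^*$; (5) $M_5=N_5=I_3$.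
   Context: The virtual twin group $VT_n$ ($n\geq 2$) has generators $s_1,\dots,s_{n-1},\rho_1,\dots,\rho_{n-1}$ and defining relations: $s_i^2=1$ ($1\le i\le n-1$); $s_is_j=s_js_i$ ($|i-j|\ge2$); $\rho_i\rho_{i+1}\rho_i=\rho_{i+1}\rho_i\rho_{i+1}$ ($1\le i\le n-2$); $\rho_i\rho_j=\rho_j\rho_i$ ($|i-j|\ge2$); $\rho_i^2=1$; $s_i\rho_j=\rho_js_i$ ($|i-j|\ge2$); $\rho_i\rho_{i+1}s_i=s_{i+1}\rho_i\rho_{i+1}$ ($1\le i\le n-2$). The welded twin group $WT_n$ is the quotient of $VT_n$ by the additional relations $\rho_is_{i+1}s_i=s_{i+1}s_i\rho_{i+1}$ ($1\le i\le n-2$). A representation $\gamma:WT_n\to\mathrm{GL}_{n+1}(\mathbb{C})$ is homogeneous $3$-local if there are fixed $M,N\in\mathrm{GL}_3(\mathbb{C})$ with $\gamma(s_i)=\mathrm{diag}(I_{i-1},M,I_{n-i-1})$ and $\gamma(\rho_i)=\mathrm{diag}(I_{i-1},N,I_{n-i-1})$ for all $i$, with $\mathrm{diag}$ block-diagonal and $I_r$ the $r\times r$ identity. $\mathbb{C}^*=\mathbb{C}\setminus\{0\}$. Equivalent means conjugate by an invertible matrix. *)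

(* The complex numbers are modelled as R[i] = complex R
   (mathcomp-real-closed) for R : realType (the real numbers). *)
From HB Require Import structures.
From mathcomp Require Import all_boot all_order all_algebra.
From mathcomp Require Import reals complex.
Set Implicit Arguments. Unset Strict Implicit. Unset Printing Implicit Defensive.
Import Order.TTheory GRing.Theory Num.Theory.
Local Open Scope ring_scope.

Definition mx3 (K : nzRingType) (a b c d e f g h k : K) : 'M[K]_3 :=
  \matrix_(r < 3, s < 3)
    nth 0 (nth [::] [:: [:: a; b; c]; [:: d; e; f]; [:: g; h; k]] r) s.

(* diag(I_{i-1}, A, I_{n-i-1}) in 'M_(n+1), for 1 <= i <= n-1 (1-based i):
   the block A occupies (0-based) rows/columns i-1, i, i+1. *)
Definition locmx (K : nzRingType) (n i : nat) (A : 'M[K]_3) : 'M[K]_(n.+1) :=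
  \matrix_(r < n.+1, s < n.+1)
    if (i.-1 <= r < i.+2)%N && (i.-1 <= s < i.+2)%N
    then A (inord (r - i.-1)) (inord (s - i.-1))
    else (r == s)%:R.

Definition gen_idx (n i : nat) : bool := (1 <= i <= n.-1)%N.
Definition far (i j : nat) : bool := (i + 2 <= j)%N || (j + 2 <= i)%N.

Definition WT_relations (K : nzRingType) (n : nat) (S P : nat -> 'M[K]_(n.+1)) : Prop :=
  (forall i, gen_idx n i -> S i *m S i = 1%:M) /\
      (forall i j, gen_idx n i -> gen_idx n j -> far i j -> S i *m S j = S j *m S i) /\
      (forall i, (1 <= i <= n - 2)%N ->
         P i *m P i.+1 *m P i = P i.+1 *m P i *m P i.+1) /\
      (forall i j, gen_idx n i -> gen_idx n j -> far i j -> P i *m P j = P j *m P i) /\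
      (forall i, gen_idx n i -> P i *m P i = 1%:M) /\
      (forall i j, gen_idx n i -> gen_idx n j -> far i j -> S i *m P j = P j *m S i) /\
      (forall i, (1 <= i <= n - 2)%N ->
         P i *m P i.+1 *m S i = S i.+1 *m P i *m P i.+1) /\
      (forall i, (1 <= i <= n - 2)%N ->
         P i *m S i.+1 *m S i = S i.+1 *m S i *m P i.+1).

Definition homog_3local_rep (K : comUnitRingType) (n : nat) (M N : 'M[K]_3) : Prop :=
  M \in unitmx /\ N \in unitmx /\
  WT_relations (fun i => locmx n i M) (fun i => locmx n i N).

Definition equiv_local (K : comUnitRingType) (n : nat) (M N M' N' : 'M[K]_3) : Prop :=
  exists T : 'M[K]_(n.+1), T \in unitmx /\
    forall i, gen_idx n i ->
      T *m locmx n i M *m invmx T = locmx n i M' /\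
      T *m locmx n i N *m invmx T = locmx n i N'.

Section Reps.
Variable K : fieldType.
Definition M1 (h : K) := mx3 1 0 0 0 0 h^-1 0 h 0.
Definition N1 (p : K) := mx3 1 0 0 0 0 p 0 p^-1 0.
Definition M2 (d : K) := mx3 0 d^-1 0 d 0 0 0 0 1.
Definition N2 (k : K) := mx3 0 k 0 k^-1 0 0 0 0 1.
Definition MN3 (p : K) := mx3 1 0 0 p^-1 (-1) p 0 0 1.
Definition MN4 (k : K) := mx3 1 k 0 0 (-1) 0 0 k^-1 1.
End Reps.

(* Restricting to the generators of index 1, 2, 3 and to the top-left 5x5
   block, the defining relations of WT_4 become polynomial equations in the
   entries of M and N.  Commutation of the blocks at positions 1 and 3 kills
   the corner entries M_13, M_31, N_13, N_31.  Then N^2 = 1, the braid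
   relation and the commutation of rho_1 with rho_3 leave exactly the five
   possibilities N_1, ..., N_5 for N, and in each case s_1^2 = 1 together with
   the mixed relations between s_i and rho_j forces M = M_j.  So gamma is not
   merely equivalent but equal to some gamma_j, and the conjugating matrix can
   be taken to be the identity. *)

From HB Require Import structures.
From mathcomp Require Import all_boot all_order all_algebra.
From mathcomp Require Import reals complex.
From mathcomp Require Import ring zify.
Set Implicit Arguments. Unset Strict Implicit. Unset Printing Implicit Defensive.
Import Order.TTheory GRing.Theory Num.Theory.
Local Open Scope ring_scope.

Section Restriction.
Variables (K : nzRingType) (m n : nat).
Hypothesis le_mn : (m <= n)%N.

Definition topleft (A : 'M[K]_n.+1) : 'M[K]_m.+1 :=
  mxsub (@widen_ord m.+1 n.+1 le_mn) (@widen_ord m.+1 n.+1 le_mn) A.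

Lemma topleft_mul (Y Z : 'M[K]_n.+1) :
  (forall k s : 'I_n.+1, (m < k)%N -> (s <= m)%N -> Z k s = 0) ->
  topleft (Y *m Z) = topleft Y *m topleft Z.
Proof.
move=> Z0; apply/matrixP => r s; rewrite !mxE.
rewrite (bigID (fun k : 'I_n.+1 => (k <= m)%N)) /= [X in _ + X]big1 ?addr0.
  rewrite (big_ord_narrow (le_mn : (m.+1 <= n.+1)%N)).
  by apply: eq_bigr => k _; rewrite !mxE.
by move=> k; rewrite -ltnNge => lt_mk; rewrite Z0 ?mulr0 //= -ltnS ltn_ord.
Qed.

Lemma topleft_locmx i (A : 'M[K]_3) : topleft (locmx n i A) = locmx m i A.
Proof. by apply/matrixP => r s; rewrite !mxE. Qed.

Lemma topleft1 : topleft 1%:M = 1%:M.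
Proof. by apply/matrixP => r s; rewrite !mxE. Qed.

Lemma topleft_mul_locmx (Y : 'M[K]_n.+1) i (A : 'M[K]_3) : (i < m)%N ->
  topleft (Y *m locmx n i A) = topleft Y *m locmx m i A.
Proof.
move=> lt_im; rewrite topleft_mul ?topleft_locmx // => k s lt_mk le_sm; rewrite mxE.
have -> : (i.-1 <= k < i.+2)%N = false.
  by apply/negbTE; rewrite negb_and -leqNgt orbC (leq_trans _ lt_mk).
by rewrite andFb; case: eqP => // ks; move: lt_mk; rewrite ks ltnNge le_sm.
Qed.

Lemma WT_relations_restrict (M N : 'M[K]_3) :
  WT_relations (locmx n ^~ M) (locmx n ^~ N) ->
  WT_relations (locmx m ^~ M) (locmx m ^~ N).
Proof.
have gen i : gen_idx m i -> gen_idx n i /\ (i < m)%N by rewrite /gen_idx -!subn1; lia.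
have adj i : (1 <= i <= m - 2)%N -> (1 <= i <= n - 2)%N /\ (i < m)%N /\ (i.+1 < m)%N by lia.
case=> SS [S13 [Br [P13 [PP [SP [R1 R2]]]]]].
split; [|split; [|split; [|split; [|split; [|split; [|split]]]]]] => /=.
- move=> i /gen [gi lt_im]; move/(congr1 topleft): (SS i gi).
  by rewrite topleft_mul_locmx // topleft_locmx topleft1.
- move=> i j /gen [gi lt_im] /gen [gj lt_jm] fij; move/(congr1 topleft): (S13 i j gi gj fij).
  by rewrite !topleft_mul_locmx // !topleft_locmx.
- move=> i /adj [ai [lt_im lt_i1m]]; move/(congr1 topleft): (Br i ai).
  by rewrite !topleft_mul_locmx // !topleft_locmx.
- move=> i j /gen [gi lt_im] /gen [gj lt_jm] fij; move/(congr1 topleft): (P13 i j gi gj fij).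
  by rewrite !topleft_mul_locmx // !topleft_locmx.
- move=> i /gen [gi lt_im]; move/(congr1 topleft): (PP i gi).
  by rewrite topleft_mul_locmx // topleft_locmx topleft1.
- move=> i j /gen [gi lt_im] /gen [gj lt_jm] fij; move/(congr1 topleft): (SP i j gi gj fij).
  by rewrite !topleft_mul_locmx // !topleft_locmx.
- move=> i /adj [ai [lt_im lt_i1m]]; move/(congr1 topleft): (R1 i ai).
  by rewrite !topleft_mul_locmx // !topleft_locmx.
- move=> i /adj [ai [lt_im lt_i1m]]; move/(congr1 topleft): (R2 i ai).
  by rewrite !topleft_mul_locmx // !topleft_locmx.
Qed.

End Restriction.

Section Mx3.
Variable K : nzRingType.

Lemma mx3_1 : mx3 1 0 0 0 1 0 0 0 1 = 1%:M :> 'M[K]_3.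
Proof.
by apply/matrixP => -[[|[|[|r]]] ?] // -[[|[|[|s]]] ?] //; rewrite !mxE.
Qed.

Lemma mx3_onto (A : 'M[K]_3) : exists a b c d e f g h k, A = mx3 a b c d e f g h k.
Proof.
pose a (i j : nat) := A (inord i) (inord j).
exists (a 0 0), (a 0 1), (a 0 2), (a 1 0), (a 1 1), (a 1 2), (a 2 0), (a 2 1), (a 2 2).
apply/matrixP => -[[|[|[|r]]] ?] // -[[|[|[|s]]] ?] //;
  by rewrite mxE /a /=; congr (A _ _); apply: val_inj; rewrite /= inordK.
Qed.

End Mx3.

Section FiveByFive.
Variable K : nzRingType.

(* A 5x5 matrix given by its list of rows: products of the concrete matrices
   [locmx 4 i (mx3 ...)] then reduce by computation to polynomials in the
   entries. *)
Definition mx5 (rows : seq (seq K)) : 'M[K]_5 :=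
  \matrix_(r, s) nth 0 (nth [::] rows r) s.

Definition mul5 (rows1 rows2 : seq (seq K)) : seq (seq K) :=
  mkseq (fun r => mkseq (fun s =>
    foldr (fun k acc => nth 0 (nth [::] rows1 r) k * nth 0 (nth [::] rows2 k) s + acc)
      0 (iota 0 5)) 5) 5.

Lemma mulmx_mx5 rows1 rows2 : mx5 rows1 *m mx5 rows2 = mx5 (mul5 rows1 rows2).
Proof.
apply/matrixP => r s; rewrite !mxE /mul5 !nth_mkseq //.
by rewrite !big_ord_recr big_ord0 /= !mxE add0r addr0 -!addrA.
Qed.

Lemma scalar1_mx5 : 1%:M =
  mx5 [:: [:: 1; 0; 0; 0; 0]; [:: 0; 1; 0; 0; 0]; [:: 0; 0; 1; 0; 0];
          [:: 0; 0; 0; 1; 0]; [:: 0; 0; 0; 0; 1]].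
Proof.
by apply/matrixP => -[[|[|[|[|[|r]]]]] ?] // -[[|[|[|[|[|s]]]]] ?] //; rewrite !mxE.
Qed.

Lemma locmx4_1E (a b c d e f g h k : K) :
  locmx 4 1%N (mx3 a b c d e f g h k) =
  mx5 [:: [:: a; b; c; 0; 0]; [:: d; e; f; 0; 0]; [:: g; h; k; 0; 0];
          [:: 0; 0; 0; 1; 0]; [:: 0; 0; 0; 0; 1]].
Proof.
by apply/matrixP => -[[|[|[|[|[|r]]]]] ?] // -[[|[|[|[|[|s]]]]] ?] //;
  rewrite !mxE /= ?inordK.
Qed.

Lemma locmx4_2E (a b c d e f g h k : K) :
  locmx 4 2%N (mx3 a b c d e f g h k) =
  mx5 [:: [:: 1; 0; 0; 0; 0]; [:: 0; a; b; c; 0]; [:: 0; d; e; f; 0];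
          [:: 0; g; h; k; 0]; [:: 0; 0; 0; 0; 1]].
Proof.
by apply/matrixP => -[[|[|[|[|[|r]]]]] ?] // -[[|[|[|[|[|s]]]]] ?] //;
  rewrite !mxE /= ?inordK.
Qed.

Lemma locmx4_3E (a b c d e f g h k : K) :
  locmx 4 3%N (mx3 a b c d e f g h k) =
  mx5 [:: [:: 1; 0; 0; 0; 0]; [:: 0; 1; 0; 0; 0]; [:: 0; 0; a; b; c];
          [:: 0; 0; d; e; f]; [:: 0; 0; g; h; k]].
Proof.
by apply/matrixP => -[[|[|[|[|[|r]]]]] ?] // -[[|[|[|[|[|s]]]]] ?] //;
  rewrite !mxE /= ?inordK.
Qed.

Lemma mx5_entry rows1 rows2 r s : mx5 rows1 = mx5 rows2 -> (r < 5)%N -> (s < 5)%N ->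
  nth 0 (nth [::] rows1 r) s = nth 0 (nth [::] rows2 r) s.
Proof.
move=> E lt_r5 lt_s5.
by move/(congr1 (fun A : 'M_5 => A (Ordinal lt_r5) (Ordinal lt_s5))): E; rewrite !mxE.
Qed.

End FiveByFive.

Ltac mx5_entry_as r s E H :=
  let E5 := fresh "E5" in
  have E5 := E;
  rewrite ?locmx4_1E ?locmx4_2E ?locmx4_3E ?scalar1_mx5 ?mulmx_mx5 in E5;
  have H := mx5_entry (r := r) (s := s) E5 isT isT; clear E5;
  rewrite /= ?(mul0r, mulr0, mul1r, mulr1, add0r, addr0, oppr0) in H.

(* [entry (r, s) of E as H]: H is the (r, s) entry of the relation E between
   products of the 5x5 matrices [locmx 4 i (mx3 ...)], as a polynomial identity. *)
Tactic Notation "entry" "(" uconstr(r) "," uconstr(s) ")" "of" hyp(E) "as" ident(H) :=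
  mx5_entry_as r s E H.

Section FieldFacts.
Variable K : fieldType.
Implicit Types x y u v a b c d : K.

Lemma eq_rearrange a b x y : a = b -> x - y = a - b -> x = y.
Proof. by move=> -> /eqP; rewrite subrr subr_eq0 => /eqP. Qed.

Lemma eq_lincomb a b c d u v x y :
  a = b -> c = d -> x - y = u * (a - b) + v * (c - d) -> x = y.
Proof. by move=> -> -> /eqP; rewrite !subrr !mulr0 addr0 subr_eq0 => /eqP. Qed.

Lemma mulf_eq0P x y : x * y = 0 -> x = 0 \/ y = 0.
Proof. by move/eqP; rewrite mulf_eq0 => /orP[] /eqP; [left | right]. Qed.

Lemma sqrf_eq0P x : x * x = 0 -> x = 0.
Proof. by case/mulf_eq0P. Qed.

Lemma mulf_eq1 x y : x * y = 1 -> x != 0 /\ y = x^-1.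
Proof.
move=> xy1; have x0 : x != 0 by apply: contra_eq_neq xy1 => ->; rewrite mul0r eq_sym oner_neq0.
by split=> //; rewrite (mulr1_eq xy1).
Qed.

Lemma idempotent_sqr1 x : x * x = x -> x * x = 1 -> x = 1.
Proof. by move=> ->. Qed.

Lemma sqr_mul_sub1_eq0 x : x * x * (x - 1) = 0 -> x = 0 \/ x = 1.
Proof. by case/mulf_eq0P => [/sqrf_eq0P|/subr0_eq]; [left | right]. Qed.

End FieldFacts.

Ltac rearrange E :=
  first [ apply: eq_rearrange E _; ring | apply: eq_rearrange (esym E) _; ring ].
Tactic Notation "lincomb" uconstr(cE) constr(E) uconstr(cF) constr(F) :=
  refine (eq_lincomb (u := cE) (v := cF) E F _); ring.

Section Classification.
Variable K : fieldType.

Lemma far_commute_corners (a b c d e f g h k : K) :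
  let A := mx3 a b c d e f g h k in
  locmx 4 1%N A *m locmx 4 3%N A = locmx 4 3%N A *m locmx 4 1%N A -> c = 0 /\ g = 0.
Proof.
move=> A comm; entry (0, 4) of comm as e04; entry (4, 0) of comm as e40.
by split; apply: sqrf_eq0P.
Qed.

Definition coxeter_relations4 (N : 'M[K]_3) : Prop :=
  [/\ locmx 4 1%N N *m locmx 4 1%N N = 1%:M,
      locmx 4 1%N N *m locmx 4 2%N N *m locmx 4 1%N N =
        locmx 4 2%N N *m locmx 4 1%N N *m locmx 4 2%N N
    & locmx 4 1%N N *m locmx 4 3%N N = locmx 4 3%N N *m locmx 4 1%N N].

Lemma coxeter_relations4_n12_eq0 (n11 n21 n22 n23 n32 n33 : K) :
  let N := mx3 n11 0 0 n21 n22 n23 0 n32 n33 in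
  coxeter_relations4 N ->
  [\/ exists2 p, p != 0 & N = N1 p, exists2 p, p != 0 & N = MN3 p | N = 1%:M].
Proof.
move=> N; rewrite {}/N => -[P1P1 braid far].
entry (0, 0) of P1P1 as q00; entry (0, 0) of braid as b00.
have {q00 b00} n11_1 := idempotent_sqr1 b00 q00; subst n11.
have [n23_0|n23_neq0] := eqVneq n23 0.
  subst n23; entry (2, 2) of P1P1 as q22; entry (3, 3) of braid as b33.
  have {q22 b33} n33_1 := idempotent_sqr1 (esym b33) q22; subst n33.
  entry (1, 1) of P1P1 as q11; entry (1, 1) of braid as b11.
  have {q11 b11} n22_1 := idempotent_sqr1 b11 q11; subst n22.
  entry (1, 0) of braid as b10; entry (3, 2) of braid as b32.
  have n21_0 : n21 = 0 by rearrange b10.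
  have n32_0 : n32 = 0 by rearrange b32.
  by subst; apply: Or33; rewrite mx3_1.
entry (1, 2) of P1P1 as q12.
have n22E : n22 = - n33 by apply: (mulfI n23_neq0); rearrange q12.
subst n22; entry (2, 2) of P1P1 as q22; entry (3, 3) of braid as b33.
have : n33 * n33 * (n33 - 1) = 0 by lincomb n33 q22 1 b33.
case/sqr_mul_sub1_eq0 => n33E; subst n33.
  entry (1, 0) of P1P1 as n21_0.
  have [_ n32E] : n23 != 0 /\ n32 = n23^-1 by apply: mulf_eq1; rearrange q22.
  by subst; apply: Or31; exists n23; rewrite // oppr0.
have n32_0 : n32 = 0 by apply: (mulIf n23_neq0); rearrange q22.
entry (2, 3) of braid as b23.
have [_ n21E] : n23 != 0 /\ n21 = n23^-1.
  apply: mulf_eq1; apply: (mulIf n23_neq0); rearrange b23.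
by subst; apply: Or32; exists n23.
Qed.

Lemma coxeter_relations4_n12_neq0 (n11 n12 n21 n22 n23 n32 n33 : K) :
  let N := mx3 n11 n12 0 n21 n22 n23 0 n32 n33 in
  n12 != 0 -> coxeter_relations4 N ->
  (exists2 k, k != 0 & N = N2 k) \/ (exists2 k, k != 0 & N = MN4 k).
Proof.
move=> N; rewrite {}/N => n12_neq0 [P1P1 braid far].
entry (0, 2) of P1P1 as q02; entry (2, 3) of far as f23.
have n23_0 : n23 = 0 by apply: (mulfI n12_neq0); rearrange q02.
have n33_1 : n33 = 1 by apply: (mulIf n12_neq0); rearrange f23.
subst n23 n33; entry (0, 1) of P1P1 as q01.
have n22E : n22 = - n11 by apply: (mulfI n12_neq0); rearrange q01.
subst n22; entry (0, 0) of P1P1 as q00; entry (0, 0) of braid as b00.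
have : n11 * n11 * (n11 - 1) = 0 by lincomb n11 q00 (-1) b00.
case/sqr_mul_sub1_eq0 => n11E; subst n11.
  entry (2, 1) of P1P1 as n32_0.
  have [_ n21E] : n12 != 0 /\ n21 = n12^-1 by apply: mulf_eq1; rearrange q00.
  by subst; left; exists n12; rewrite // oppr0.
have n21_0 : n21 = 0 by apply: (mulfI n12_neq0); rearrange q00.
entry (0, 1) of braid as b01.
have [_ n32E] : n12 != 0 /\ n32 = n12^-1.
  apply: mulf_eq1; apply: (mulfI n12_neq0); rearrange b01.
by subst; right; exists n12.
Qed.

Lemma WT_relations4_N1 (p m11 m12 m21 m22 m23 m32 m33 : K) :
  let M := mx3 m11 m12 0 m21 m22 m23 0 m32 m33 in
  p != 0 -> WT_relations (locmx 4 ^~ M) (locmx 4 ^~ (N1 p)) -> exists2 h, h != 0 & M = M1 h.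
Proof.
move=> M; rewrite {}/M => p_neq0 [SS [_ [_ [_ [_ [SP [R1 R2]]]]]]].
move: (SS 1%N isT) (SP 3%N 1%N isT isT isT) (R1 1%N isT) (R2 1%N isT) => /=.
move=> {SS SP R1 R2} S1S1 S3P1 mix1 mix2.
entry (0, 0) of mix1 as m11_1; entry (0, 1) of mix1 as m12_0.
entry (3, 2) of S3P1 as m21_0.
subst m11 m12 m21; entry (2, 3) of mix2 as r23; entry (3, 3) of mix2 as r33.
entry (2, 1) of S1S1 as s21.
have m33_0 : m33 = 0.
  have [//|m33_neq0] := eqVneq m33 0.
  have m22_0 : m22 = 0 by apply: (mulIf p_neq0); apply: (mulIf m33_neq0); rearrange r23.
  have [m32_neq0 _] : m32 != 0 /\ p = m32^-1.
    by apply: mulf_eq1; apply: (mulfI m33_neq0); rearrange r33.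
  by subst m22; apply: (mulfI m32_neq0); rearrange s21.
subst m33; entry (2, 2) of S1S1 as s22; entry (1, 1) of S1S1 as s11.
have [m32_neq0 m23E] := mulf_eq1 s22.
have m22_0 : m22 = 0 by apply: sqrf_eq0P; lincomb 1 s11 (-1) s22.
by subst; exists m32.
Qed.

Lemma WT_relations4_N2 (k m11 m12 m21 m22 m23 m32 m33 : K) :
  let M := mx3 m11 m12 0 m21 m22 m23 0 m32 m33 in
  k != 0 -> WT_relations (locmx 4 ^~ M) (locmx 4 ^~ (N2 k)) -> exists2 d, d != 0 & M = M2 d.
Proof.
move=> M; rewrite {}/M => k_neq0 [SS [_ [_ [_ [_ [SP [R1 R2]]]]]]].
move: (SS 1%N isT) (SP 1%N 3%N isT isT isT) (R1 1%N isT) (R2 1%N isT) => /=.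
move=> {SS SP R1 R2} S1S1 S1P3 mix1 mix2.
entry (1, 2) of S1P3 as m23_0; entry (2, 1) of S1P3 as m32_0.
entry (3, 3) of mix1 as m33_1.
subst m23 m32 m33; entry (1, 2) of mix2 as r12; entry (0, 0) of mix2 as r00.
entry (1, 0) of S1S1 as s10.
have m11_0 : m11 = 0.
  have [//|m11_neq0] := eqVneq m11 0.
  have m22_0 : m22 = 0 by apply: (mulIf k_neq0); apply: (mulfI m11_neq0); rearrange r12.
  have [m21_neq0 _] : m21 != 0 /\ k = m21^-1.
    by apply: mulf_eq1; apply: (mulfI m11_neq0); rearrange r00.
  by subst m22; apply: (mulfI m21_neq0); rearrange s10.
subst m11; entry (0, 0) of S1S1 as s00; entry (1, 1) of S1S1 as s11.
have [m21_neq0 m12E] : m21 != 0 /\ m12 = m21^-1 by apply: mulf_eq1; rearrange s00.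
have m22_0 : m22 = 0 by apply: sqrf_eq0P; lincomb 1 s11 (-1) s00.
by subst; exists m21.
Qed.

Lemma WT_relations4_MN3 (p m11 m12 m21 m22 m23 m32 m33 : K) :
  let M := mx3 m11 m12 0 m21 m22 m23 0 m32 m33 in
  (2%:R : K) != 0 -> p != 0 ->
  WT_relations (locmx 4 ^~ M) (locmx 4 ^~ (MN3 p)) -> M = MN3 p.
Proof.
move=> M; rewrite {}/M => two_neq0 p_neq0 [SS [_ [_ [_ [_ [_ [R1 R2]]]]]]].
move: (SS 1%N isT) (R1 1%N isT) (R2 1%N isT) => /= {SS R1 R2} S1S1 mix1 mix2.
entry (0, 0) of mix1 as m11_1; entry (0, 1) of mix1 as m12_0.
entry (3, 2) of mix1 as r32; entry (3, 3) of mix1 as r33.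
have m32_0 : m32 = 0 by rearrange r32.
have m33_1 : m33 = 1 by subst m32; rearrange r33.
subst m11 m12 m32 m33; entry (1, 1) of S1S1 as s11; entry (2, 2) of mix2 as r22.
have [m22_neq0 _] := mulf_eq1 s11.
have m22E : m22 = -1.
  have [//|m22_neq_m1] := eqVneq m22 (-1).
  have m22D1_neq0 : m22 + 1 != 0 by rewrite addr_eq0.
  entry (1, 0) of S1S1 as s10; entry (1, 2) of S1S1 as s12.
  have m21_0 : m21 = 0 by apply: (mulIf m22D1_neq0); rearrange s10.
  have m23_0 : m23 = 0 by apply: (mulIf m22D1_neq0); rearrange s12.
  have m22_0 : m22 = 0 by subst m21 m23; apply: (mulfI two_neq0); rearrange r22.
  by rewrite m22_0 eqxx in m22_neq0.
subst m22; entry (2, 3) of mix1 as r23.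
have m21m23 : m21 * m23 = 1 by apply: (mulfI two_neq0); rearrange r22.
(* Multiplied by m21, the entry r23 becomes (p * m21 - 1)^2 = 0. *)
have : p * m21 = 1.
  by apply: subr0_eq; apply: sqrf_eq0P; lincomb (- m21) r23 (-1) m21m23.
case/mulf_eq1 => _ m21E; subst m21.
by rewrite -(mulr1_eq m21m23) invrK.
Qed.

Lemma WT_relations4_MN4 (k m11 m12 m21 m22 m23 m32 m33 : K) :
  let M := mx3 m11 m12 0 m21 m22 m23 0 m32 m33 in
  (2%:R : K) != 0 -> k != 0 ->
  WT_relations (locmx 4 ^~ M) (locmx 4 ^~ (MN4 k)) -> M = MN4 k.
Proof.
move=> M; rewrite {}/M => two_neq0 k_neq0 [SS [_ [_ [_ [_ [SP [R1 R2]]]]]]].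
move: (SS 1%N isT) (SP 1%N 3%N isT isT isT) (R1 1%N isT) (R2 1%N isT) => /=.
move=> {SS SP R1 R2} S1S1 S1P3 mix1 mix2.
entry (1, 3) of S1P3 as c13; entry (3, 3) of mix1 as m33_1.
entry (1, 0) of mix1 as r10; entry (0, 0) of mix1 as r00.
have m23_0 : m23 = 0 by apply: (mulIf k_neq0); rearrange c13.
have m21_0 : m21 = 0 by rearrange r10.
have m11_1 : m11 = 1 by subst m21; rearrange r00.
subst m11 m21 m23 m33; entry (1, 1) of S1S1 as s11; entry (1, 1) of mix2 as r11.
have [m22_neq0 _] := mulf_eq1 s11.
have m22E : m22 = -1.
  have [//|m22_neq_m1] := eqVneq m22 (-1).
  have m22D1_neq0 : m22 + 1 != 0 by rewrite addr_eq0.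
  entry (0, 1) of S1S1 as s01; entry (2, 1) of S1S1 as s21.
  have m12_0 : m12 = 0 by apply: (mulIf m22D1_neq0); rearrange s01.
  have m32_0 : m32 = 0 by apply: (mulIf m22D1_neq0); rearrange s21.
  have m22_0 : m22 = 0 by subst m12 m32; apply: (mulfI two_neq0); rearrange r11.
  by rewrite m22_0 eqxx in m22_neq0.
subst m22; entry (0, 1) of mix1 as r01.
have m12m32 : m12 * m32 = 1 by apply: (mulfI two_neq0); rearrange r11.
have : k * m32 = 1.
  by apply: subr0_eq; apply: sqrf_eq0P; lincomb m32 r01 (-1) m12m32.
case/mulf_eq1 => _ m32E; subst m32.
by rewrite (divr1_eq m12m32).
Qed.

Lemma WT_relations4_1 (m11 m12 m21 m22 m23 m32 m33 : K) :
  let M := mx3 m11 m12 0 m21 m22 m23 0 m32 m33 in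
  WT_relations (locmx 4 ^~ M) (locmx 4 ^~ 1%:M) -> M = 1%:M.
Proof.
move=> M; rewrite {}/M -mx3_1 => -[_ [_ [_ [_ [_ [_ [R1 _]]]]]]].
move: (R1 1%N isT) => /= {R1} S1_S2.
entry (0, 0) of S1_S2 as e00; entry (0, 1) of S1_S2 as e01; entry (1, 0) of S1_S2 as e10.
subst m11 m12 m21; entry (1, 1) of S1_S2 as e11; entry (1, 2) of S1_S2 as e12.
entry (2, 1) of S1_S2 as e21; subst m22 m23 m32; entry (2, 2) of S1_S2 as e22.
by subst m33.
Qed.

Lemma WT_relations4_coxeter (M N : 'M[K]_3) :
  WT_relations (locmx 4 ^~ M) (locmx 4 ^~ N) -> coxeter_relations4 N.
Proof. by case=> _ [_ [Br [P13 [PP _]]]]; split; [apply: PP | apply: Br | apply: P13]. Qed.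

Lemma WT_relations4_classification (M N : 'M[K]_3) :
  (2%:R : K) != 0 -> WT_relations (locmx 4 ^~ M) (locmx 4 ^~ N) ->
     (exists h p : K, [/\ h != 0, p != 0 & M = M1 h /\ N = N1 p]) \/
      (exists d k : K, [/\ d != 0, k != 0 & M = M2 d /\ N = N2 k]) \/
      (exists p : K, p != 0 /\ M = MN3 p /\ N = MN3 p) \/
      (exists k : K, k != 0 /\ M = MN4 k /\ N = MN4 k) \/
      (M = 1%:M /\ N = 1%:M).
Proof.
move=> two_neq0 rel.
have [m11 [m12 [m13 [m21 [m22 [m23 [m31 [m32 [m33 defM]]]]]]]]] := mx3_onto M.
have [n11 [n12 [n13 [n21 [n22 [n23 [n31 [n32 [n33 defN]]]]]]]]] := mx3_onto N.
subst M N; have [_ [S13 [_ [P13 _]]]] := rel.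
have [m13_0 m31_0] := far_commute_corners (S13 1%N 3%N isT isT isT).
have [n13_0 n31_0] := far_commute_corners (P13 1%N 3%N isT isT isT).
subst m13 m31 n13 n31; have cox := WT_relations4_coxeter rel.
have [n12_0|n12_neq0] := eqVneq n12 0.
  subst n12; case: (coxeter_relations4_n12_eq0 cox) => [[p p_neq0]|[p p_neq0]|] defN;
    rewrite defN in rel *.
  - by left; have [h h_neq0 ->] := WT_relations4_N1 p_neq0 rel; exists h, p.
  - by do 2!right; left; exists p; rewrite (WT_relations4_MN3 two_neq0 p_neq0 rel).
  - by do 4!right; rewrite (WT_relations4_1 rel).
case: (coxeter_relations4_n12_neq0 n12_neq0 cox) => -[k k_neq0 defN]; rewrite defN in rel *.
- by right; left; have [d d_neq0 ->] := WT_relations4_N2 k_neq0 rel; exists d, k.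
- by do 3!right; left; exists k; rewrite (WT_relations4_MN4 two_neq0 k_neq0 rel).
Qed.

End Classification.

Lemma equiv_local_refl (K : comUnitRingType) n (M N : 'M[K]_3) : equiv_local n M N M N.
Proof.
exists 1%:M; split; first exact: unitmx1.
by move=> j _; rewrite invmx1 !mul1mx !mulmx1.
Qed.

Theorem theorem4p2 (R : realType) (n : nat) (M N : 'M[R[i]]_3) :
  (4 <= n)%N ->
  homog_3local_rep n M N ->
     (exists h p : R[i], [/\ h != 0, p != 0 & equiv_local n M N (M1 h) (N1 p)]) \/
      (exists d k : R[i], [/\ d != 0, k != 0 & equiv_local n M N (M2 d) (N2 k)]) \/
      (exists p : R[i], p != 0 /\ equiv_local n M N (MN3 p) (MN3 p)) \/
      (exists k : R[i], k != 0 /\ equiv_local n M N (MN4 k) (MN4 k)) \/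
      equiv_local n M N 1%:M 1%:M.
Proof.
move=> le4n [_ [_ rel]].
have two_neq0 : (2%:R : R[i]) != 0 by rewrite pnatr_eq0.
case: (WT_relations4_classification two_neq0 (WT_relations_restrict le4n rel)) =>
  [[h [p [h0 p0 [-> ->]]]] | [[d [k [d0 k0 [-> ->]]]] |
  [[p [p0 [-> ->]]] | [[k [k0 [-> ->]]] | [-> ->]]]]].
- by left; exists h, p; split=> //; apply: equiv_local_refl.
- by right; left; exists d, k; split=> //; apply: equiv_local_refl.
- by do 2!right; left; exists p; split=> //; apply: equiv_local_refl.
- by do 3!right; left; exists k; split=> //; apply: equiv_local_refl.
- by do 4!right; apply: equiv_local_refl.
Qed.
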